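(* Let $G=(V,E)$ be a finite simple graph and let $\mathcal{X}=(X_i)_{i=1}^n$ be a sequence of subsets of $V$. Then $\mathcal{X}$ is a measurement schedule on the graph state $|G\rangle$ if and only if $\mathcal{X}$ is a path decomposition of $G$.
   Context: The graph state of $G$ is $|G\rangle=\left(\prod_{e\in E} CZ_e\right)|+\rangle^{\otimes V}$, with one qubit per vertex. A measurement schedule on $|G\rangle$ is a process of initialising and measuring the qubits (vertices), represented by the sequence $(X_i)_{i=1}^n$ where $X_i\subseteq V$ is the set of qubits that are active (initialised but not yet measured) at step $i$. It must satisfy: (M1) each qubit is initialised exactly once (so every $v\in V$ lies in some $X_i$, and the set of steps at which $v$ is active is a single contiguous block of indices, after which $v$ is measured and never active again); (M2) a qubit is measured only after all of its neighbouring qubits have been initialised (i.e. if $j$ is the last index with $v\in X_j$, then every neighbour $u$ of $v$ lies in some $X_i$ with $i\le j$). A path decomposition of $G$ is a sequence $(X_i)_{i=1}^n$ of subsets of $V$ such that: (P1) every $v\in V$ lies in some $X_i$; (P2) for every edge $e\in E$ there is an $i$ with $e\subseteq X_i$; (P3) for all $i\le j\le k$, if $v\in X_i\cap X_k$ then $v\in X_j$. *)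

(* A sequence of subsets
   (X_i)_{i=1}^n is a list X : seq {set V}; index i (1-based in the paper)
   corresponds to position i-1 in the list, i.e. nth set0 X (i-1). *)
From mathcomp Require Import all_boot.
Set Implicit Arguments. Unset Strict Implicit. Unset Printing Implicit Defensive.

Section Defs.
Variable V : finType.

Definition bag (X : seq {set V}) (i : nat) : {set V} := nth set0 X i.

Definition covers_vertices (X : seq {set V}) : Prop :=
  forall v : V, exists2 i, i < size X & v \in bag X i.

Definition contiguous (X : seq {set V}) : Prop :=
  forall (v : V) (i j k : nat), i <= j -> j <= k -> k < size X ->
    v \in bag X i -> v \in bag X k -> v \in bag X j.

Definition last_active (X : seq {set V}) (v : V) (j : nat) : Prop :=
  [/\ j < size X, v \in bag X j &
      forall k, j < k -> k < size X -> v \notin bag X k].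

Definition measurement_schedule (e : rel V) (X : seq {set V}) : Prop :=
  [/\ covers_vertices X, contiguous X &
      forall (v : V) (j : nat), last_active X v j ->
        forall u : V, e v u -> exists2 i, i <= j & u \in bag X i].

Definition path_decomposition (e : rel V) (X : seq {set V}) : Prop :=
  [/\ covers_vertices X,
      (forall u v : V, e u v ->
         exists2 i, i < size X & (u \in bag X i) && (v \in bag X i)) &
      contiguous X].
End Defs.

(* If uv is an edge and u is measured no later than v
   (at index j_u), then (M2) puts v in some bag at or before j_u; since v is
   still active at its own last index j_v >= j_u, contiguity keeps v active at
   j_u, where u is active too.  Conversely a common bag of v and u lies at or
   before the last index of v, which is (M2). *)
From mathcomp Require Import all_boot.
Set Implicit Arguments. Unset Strict Implicit. Unset Printing Implicit Defensive.

Section LastActive.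
Variables (V : finType) (X : seq {set V}) (v : V).

Lemma last_active_exists i :
  i < size X -> v \in bag X i -> exists j, last_active X v j.
Proof.
move=> i_lt v_i.
have ex_active : exists n, (n < size X) && (v \in bag X n).
  by exists i; rewrite i_lt v_i.
have active_bounded n : (n < size X) && (v \in bag X n) -> n <= size X.
  by case/andP=> /ltnW.
case: (ex_maxnP ex_active active_bounded) => j /andP[j_lt v_j] j_max.
exists j; split=> // k lt_jk k_lt; apply/negP=> v_k.
by have := j_max k; rewrite k_lt v_k leqNgt lt_jk => /(_ isT).
Qed.

Lemma last_active_ge j i :
  last_active X v j -> i < size X -> v \in bag X i -> i <= j.
Proof.
case=> _ _ inactive_after i_lt v_i; rewrite leqNgt; apply/negP=> lt_ji.
by move: (inactive_after i lt_ji i_lt); rewrite v_i.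
Qed.

End LastActive.

Lemma schedule_edge_in_bag (V : finType) (e : rel V) (X : seq {set V})
    (u v : V) (ju jv : nat) :
  measurement_schedule e X -> e u v ->
  last_active X u ju -> last_active X v jv -> ju <= jv ->
  (u \in bag X ju) && (v \in bag X ju).
Proof.
case=> _ contig neighbours_first euv last_u [jv_lt v_jv _] le_uv.
have [ju_lt u_ju _] := last_u.
have [i le_i v_i] := neighbours_first u ju last_u v euv.
by rewrite u_ju (contig v i ju jv).
Qed.

Theorem theorem1 (V : finType) (e : rel V)
    (e_sym : symmetric e) (e_irr : irreflexive e) (X : seq {set V}) :
  measurement_schedule e X <-> path_decomposition e X.
Proof.
split.
- move=> sched; have [cover contig _] := sched; split=> // u v euv.
  have [iu iu_lt u_iu] := cover u; have [iv iv_lt v_iv] := cover v.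
  have [ju last_u] := last_active_exists iu_lt u_iu.
  have [jv last_v] := last_active_exists iv_lt v_iv.
  have [[ju_lt _ _] [jv_lt _ _]] := (last_u, last_v).
  case: (leqP ju jv) => [le_uv | /ltnW le_vu].
  + by exists ju; last exact: schedule_edge_in_bag sched euv last_u last_v le_uv.
  + exists jv; rewrite // andbC.
    by apply: schedule_edge_in_bag sched _ last_v last_u le_vu; rewrite e_sym.
- case=> cover edge_bag contig; split=> // v j last_v u evu.
  have [i i_lt /andP[v_i u_i]] := edge_bag v u evu.
  by exists i; first exact: last_active_ge last_v i_lt v_i.
Qed.
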